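(* Let $n\geq 5$ and let $S$ be the set of all $3$-cycles in $S_n$. Let $CAG_n=\mathrm{Cay}(A_n,S)$ be the complete alternating group graph. Then $$\mathrm{Aut}(CAG_n)=(R(A_n)\rtimes \mathrm{Inn}(S_n))\rtimes \mathbb{Z}_2\cong (A_n\rtimes S_n)\rtimes \mathbb{Z}_2,$$ where $R(A_n)$ is the right regular representation of $A_n$, $\mathrm{Inn}(S_n)$ is the inner automorphism group of $S_n$ (acting on $A_n$ by conjugation), and $\mathbb{Z}_2=\langle h\rangle$ with $h$ the map $\alpha\mapsto\alpha^{-1}$ for all $\alpha\in A_n$.
   Context: For a finite group $\Gamma$ and a subset $T\subseteq\Gamma$ with $e\notin T$ and $T=T^{-1}$, the Cayley graph $\mathrm{Cay}(\Gamma,T)$ is the undirected graph with vertex set $\Gamma$ and edge set $\{\{\gamma,t\gamma\}\mid \gamma\in\Gamma, t\in T\}$. The right regular representation is $R(\Gamma)=\{r_\gamma: x\mapsto x\gamma\mid\gamma\in\Gamma\}$, a subgroup of the automorphism group of the Cayley graph. $A_n$ and $S_n$ denote the alternating and symmetric groups of degree $n$. *)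

From mathcomp Require Import all_boot all_fingroup all_solvable.
Set Implicit Arguments. Unset Strict Implicit. Unset Printing Implicit Defensive.
Local Open Scope group_scope.

(* Vertex set of CAG_n: the elements of A_n, as the finite group type [subg 'Alt]. *)
Definition V (n : nat) : finGroupType := subg_of ('Alt_('I_n))%G.

Definition is3cycle (n : nat) (s : 'S_n) : bool :=
  [exists a : 'I_n, exists b : 'I_n, exists c : 'I_n,
    [&& a != b, b != c, a != c,
        s a == b, s b == c, s c == a &
        [forall i : 'I_n, (i \notin [:: a; b; c]) ==> (s i == i)]]].

(* Cay(A_n, S): {x, y} is an edge iff y = t x for some 3-cycle t, i.e. y x^-1 in S. *)
Definition cag_adj (n : nat) (x y : V n) : bool :=
  is3cycle (sgval y * (sgval x)^-1).

Definition CAGAut (n : nat) : {set {perm V n}} :=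
  [set f : {perm V n} | [forall x : V n, forall y : V n,
      cag_adj (f x) (f y) == cag_adj x y]].

Definition RA (n : nat) : {set {perm V n}} :=
  [set f : {perm V n} | [exists g : V n, [forall x : V n, f x == x * g]]].

Definition InnS (n : nat) : {set {perm V n}} :=
  [set f : {perm V n} | [exists s : 'S_n,
      [forall x : V n, sgval (f x) == (sgval x) ^ s]]].

Definition hinv (n : nat) : {perm V n} := perm (@invg_inj (V n)).

From mathcomp Require Import all_boot all_fingroup all_solvable.
Set Implicit Arguments. Unset Strict Implicit. Unset Printing Implicit Defensive.
Local Open Scope group_scope.

(* Every automorphism of CAG_n is a right translation composed with an
   automorphism fixing 1.  The latter permutes the neighbourhood of 1, i.e. the
   3-cycles, and preserves the induced adjacency (s ~ t iff t s^-1 is a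
   3-cycle).  In this graph the pairs {s, s^-1} are the adjacent pairs without
   common neighbour, and the 3-cycles sending x to y are spanned by any two
   adjacent, non-inverse ones among them.  Hence the automorphism permutes the
   arrows x -> y; the images of the arrows leaving x all pass through a point
   sigma x, and each 3-cycle u is mapped to u^sigma, or uniformly to
   (u^sigma)^-1.  Composing with a conjugation and possibly the inversion h
   leaves an automorphism fixing 1 and its neighbours.  The set of vertices
   whose closed neighbourhood is fixed is stable under left multiplication by
   3-cycles, which generate the simple group A_n, so that automorphism is the
   identity. *)

Lemma exists_avoid (T : finType) (P : {pred T}) (s : seq T) :
  size s < #|P| -> exists2 x, x \in P & x \notin s.
Proof.
move=> lt_s_P; apply/subsetPn; apply: contraTN lt_s_P => /subset_leq_card leP.
by rewrite -leqNgt (leq_trans leP) ?card_size.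
Qed.

Section PairsOfPoints.
Variable T : finType.
Implicit Types (S : {set T}) (a b c d : T).

Lemma cards2_eq S a b : #|S| = 2 -> a \in S -> b \in S -> a != b -> S = [set a; b].
Proof.
move=> cardS aS bS ab; apply/eqP; rewrite eq_sym eqEcard cardS cards2 ab leqnn andbT.
by apply/subsetP=> x; rewrite !inE => /orP[] /eqP->.
Qed.

Lemma cards2_mem S a : #|S| = 2 -> a \in S -> exists2 b, b != a & S = [set a; b].
Proof.
move=> cardS aS; have : 0 < #|S :\ a|.
  by move: cardS; rewrite (cardsD1 a S) aS add1n => -[->].
case/card_gt0P=> b; rewrite !inE => /andP[ba bS].
by exists b => //; apply: cards2_eq; rewrite // eq_sym.
Qed.

Lemma set2_inj a b c d : a != b -> [set a; b] = [set c; d] ->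
  (a = c /\ b = d) \/ (a = d /\ b = c).
Proof.
move=> ab E; have : a \in [set c; d] by rewrite -E !inE eqxx.
have : b \in [set c; d] by rewrite -E !inE eqxx orbT.
rewrite !inE => /orP[] /eqP bE /orP[] /eqP aE; subst; rewrite ?eqxx // in ab.
- by right.
- by left.
Qed.

End PairsOfPoints.

Lemma common_point (I T : finType) (P : {pred I}) (E : I -> {set T}) :
  3 < #|P| -> {in P, forall i, #|E i| = 2} ->
  {in P &, forall i j, i != j -> E i != E j /\ E i :&: E j != set0} ->
  exists c, {in P, forall i, c \in E i}.
Proof.
move=> P_gt3 E_card2 Emeet.
have [i1 P1 _] := @exists_avoid _ P [::] (ltn_trans (isT : 0 < 3) P_gt3).
have [i2 P2] := @exists_avoid _ P [:: i1] (ltn_trans (isT : 1 < 3) P_gt3).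
rewrite inE => i21.
have [E21 /set0Pn[c /setIP[c2 c1]]] := Emeet _ _ P2 P1 i21.
have [p pc E1] := cards2_mem (E_card2 _ P1) c1.
have [r rc E2] := cards2_mem (E_card2 _ P2) c2.
have pr : p != r by apply: contra E21 => /eqP pr; rewrite E1 E2 pr.
have off_c j : j \in P -> j != i1 -> j != i2 -> c \notin E j -> E j = [set p; r].
  move=> Pj j1 j2 cj.
  have [_ /set0Pn[p' /setIP[p'j p'1]]] := Emeet _ _ Pj P1 j1.
  have [_ /set0Pn[r' /setIP[r'j r'2]]] := Emeet _ _ Pj P2 j2.
  have p'c : p' != c by apply: contraNneq cj => <-.
  have r'c : r' != c by apply: contraNneq cj => <-.
  move: p'1 r'2; rewrite E1 E2 !inE (negbTE p'c) (negbTE r'c) /= => /eqP p'E /eqP r'E.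
  by apply: cards2_eq (E_card2 _ Pj) _ _ pr; rewrite -?p'E -?r'E.
exists c => i Pi; apply: contraT => ci.
have i1' : i != i1 by apply: contraNneq ci => ->.
have i2' : i != i2 by apply: contraNneq ci => ->.
have Ei := off_c i Pi i1' i2' ci.
have [k Pk] := @exists_avoid _ P [:: i1; i2; i] P_gt3.
rewrite !inE !negb_or => /and3P[k1 k2 ki].
have [ck | ck] := boolP (c \in E k); last first.
  by have [kE _] := Emeet _ _ Pk Pi ki; move: kE; rewrite Ei off_c ?eqxx.
have [q qc Ek] := cards2_mem (E_card2 _ Pk) ck.
have [_ /set0Pn[q' /setIP[q'k q'i]]] := Emeet _ _ Pk Pi ki.
have [Ek1 _] := Emeet _ _ Pk P1 k1.
have [Ek2 _] := Emeet _ _ Pk P2 k2.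
rewrite Ek Ei !inE in q'k q'i.
case/orP: q'k => /eqP q'E; subst q'.
  by rewrite (eq_sym c) (negbTE pc) (eq_sym c) (negbTE rc) in q'i.
case/orP: q'i => /eqP qE; subst q.
- by rewrite Ek -E1 eqxx in Ek1.
by rewrite Ek -E2 eqxx in Ek2.
Qed.
(** * Three-cycles *)

Section ThreeCycles.
Variable n : nat.
Implicit Types s t u g : 'S_n.
Implicit Types a b c d p x : 'I_n.

Variant cycle3_spec s a b c : Prop :=
  Cycle3Spec of a != b & b != c & a != c & s a = b & s b = c & s c = a &
    (forall p, p != a -> p != b -> p != c -> s p = p).

Lemma is3cycleP s : reflect (exists a b c, cycle3_spec s a b c) (is3cycle s).
Proof.
apply: (iffP existsP) => [[a /existsP[b /existsP[c]]] | [a [b [c [ab bc ac sa sb sc sP]]]]].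
  case/and4P=> ab bc ac /and4P[/eqP sa /eqP sb /eqP sc /forallP sP].
  exists a, b, c; split=> // p pa pb pc; apply/eqP/(implyP (sP p)).
  by rewrite !inE negb_or pa negb_or pb pc.
exists a; apply/existsP; exists b; apply/existsP; exists c.
rewrite ab bc ac sa sb sc !eqxx; apply/forallP=> p; apply/implyP.
by rewrite !inE => /norP[pa /norP[pb pc]]; rewrite sP.
Qed.

Lemma cycle3_spec_rot s a b c : cycle3_spec s a b c -> cycle3_spec s b c a.
Proof.
case=> ab bc ac sa sb sc sP; split=> //; try by rewrite eq_sym.
by move=> p pb pc pa; apply: sP.
Qed.

Lemma cycle3_spec_moved s x : is3cycle s -> s x != x ->
  cycle3_spec s x (s x) (s (s x)).
Proof.
case/is3cycleP=> a [b [c sabc]] sx; have sbca := cycle3_spec_rot sabc.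
have [ab bc ac sa sb sc sP] := sabc.
have [-> | xa] := eqVneq x a; first by rewrite sa sb.
have [-> | xb] := eqVneq x b; first by rewrite sb sc.
have [-> | xc] := eqVneq x c; first by rewrite sc sa; apply: cycle3_spec_rot.
by rewrite sP ?eqxx in sx.
Qed.

Lemma perm_invE s a b : s a = b -> s^-1 b = a.
Proof. by move<-; rewrite permK. Qed.

Lemma cycle3_specV s a b c : cycle3_spec s a b c -> cycle3_spec s^-1 a c b.
Proof.
case=> ab bc ac sa sb sc sP; split=> //; try by rewrite eq_sym.
- exact: perm_invE.
- exact: perm_invE.
- exact: perm_invE.
by move=> p pa pc pb; apply: perm_invE; rewrite sP.
Qed.

Lemma cycle3_specJ s g a b c :
  cycle3_spec s a b c -> cycle3_spec (s ^ g) (g a) (g b) (g c).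
Proof.
case=> ab bc ac sa sb sc sP; split; rewrite ?(inj_eq perm_inj) ?permJ ?sa ?sb ?sc //.
move=> p pa pb pc; rewrite -(permKV g p) permJ sP //.
- by apply: contra pa => /eqP <-; rewrite permKV.
- by apply: contra pb => /eqP <-; rewrite permKV.
by apply: contra pc => /eqP <-; rewrite permKV.
Qed.

Lemma is3cycleV s : is3cycle s^-1 = is3cycle s.
Proof.
suff imp t : is3cycle t -> is3cycle t^-1 by apply/idP/idP => /imp; rewrite ?invgK.
by case/is3cycleP=> a [b [c /cycle3_specV tV]]; apply/is3cycleP; exists a, c, b.
Qed.

Lemma is3cycleJ s g : is3cycle (s ^ g) = is3cycle s.
Proof.
suff imp t h : is3cycle t -> is3cycle (t ^ h).
  by apply/idP/idP => [/(imp _ g^-1)|/imp//]; rewrite conjgK.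
by case/is3cycleP=> a [b [c /(cycle3_specJ h) tJ]]; apply/is3cycleP; exists (h a), (h b), (h c).
Qed.

Lemma is3cycle1 : ~~ is3cycle (1 : 'S_n).
Proof. by apply/is3cycleP=> -[a [b [c [/eqP ab _ _]]]]; rewrite perm1 => /ab. Qed.

Lemma cycle3_spec_uniq s t a b c :
  cycle3_spec s a b c -> cycle3_spec t a b c -> s = t.
Proof.
case=> _ _ _ sa sb sc sP [_ _ _ ta tb tc tP]; apply/permP=> p.
have [-> | pa] := eqVneq p a; first by rewrite sa ta.
have [-> | pb] := eqVneq p b; first by rewrite sb tb.
have [-> | pc] := eqVneq p c; first by rewrite sc tc.
by rewrite sP ?tP.
Qed.

Lemma cycle3_eq s t x : is3cycle s -> is3cycle t -> s x != x ->
  t x = s x -> t (s x) = s (s x) -> t = s.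
Proof.
move=> s3 t3 sx tx tsx; have tx' : t x != x by rewrite tx.
apply: (cycle3_spec_uniq (cycle3_spec_moved t3 tx')).
by rewrite tx tsx; apply: cycle3_spec_moved.
Qed.

Definition cyc3 a b c : 'S_n := tperm a b * tperm a c.

Lemma cyc3_spec a b c : a != b -> b != c -> a != c -> cycle3_spec (cyc3 a b c) a b c.
Proof.
move=> ab bc ac; split; rewrite ?permM //.
- by rewrite tpermL tpermD // eq_sym.
- by rewrite tpermR tpermL.
- by rewrite (tpermD ac bc) tpermR.
by move=> p pa pb pc; rewrite permM !tpermD // eq_sym.
Qed.

Lemma is3cycle_cyc3 a b c : a != b -> b != c -> a != c -> is3cycle (cyc3 a b c).
Proof. by move=> ab bc ac; apply/is3cycleP; exists a, b, c; apply: cyc3_spec. Qed.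

Lemma is3cycle_Alt s : is3cycle s -> s \in 'Alt_('I_n).
Proof.
case/is3cycleP=> a [b [c sabc]]; have [ab bc ac _ _ _ _] := sabc.
rewrite (cycle3_spec_uniq sabc (cyc3_spec ab bc ac)).
by rewrite Alt_even odd_permM !odd_tperm ab ac.
Qed.

Definition moved s := [set p | s p != p].

Lemma moved_perm s p : (s p \in moved s) = (p \in moved s).
Proof. by rewrite !inE (inj_eq perm_inj). Qed.

Lemma moved_cycle3 s a b c : cycle3_spec s a b c -> moved s = [set a; b; c].
Proof.
case=> ab bc ac sa sb sc sP; apply/setP=> p; rewrite !inE.
have [-> | pa] := eqVneq p a; first by rewrite sa eq_sym.
have [-> | pb] := eqVneq p b; first by rewrite sb eq_sym.
have [-> | pc] := eqVneq p c; first by rewrite sc.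
by rewrite sP ?eqxx.
Qed.

Lemma card_moved3 s : is3cycle s -> #|moved s| = 3.
Proof.
case/is3cycleP=> a [b [c sabc]]; have [ab bc ac _ _ _ _] := sabc.
by rewrite (moved_cycle3 sabc) -setUA cardsU1 cards2 !inE bc negb_or ab ac.
Qed.

Lemma uniq_moved_le3 s (r : seq 'I_n) :
  is3cycle s -> uniq r -> {subset r <= moved s} -> size r <= 3.
Proof. by move=> s3 /card_uniqP <- /subsetP/subset_leq_card; rewrite card_moved3. Qed.

Lemma is3cycle_no_disjoint_arrows s a b c d :
  is3cycle s -> s a = b -> s c = d -> ~~ uniq [:: a; b; c; d].
Proof.
move=> s3 sa sc; apply/negP=> abcd.
suff /(uniq_moved_le3 s3 abcd) : {subset [:: a; b; c; d] <= moved s} by [].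
move: abcd; rewrite /= !inE !negb_or => /and4P[/and3P[ab _ _] /andP[_ _] cd _].
have am : a \in moved s by rewrite inE sa eq_sym.
have cm : c \in moved s by rewrite inE sc eq_sym.
move=> p; rewrite !in_cons in_nil orbF => /or4P[] /eqP-> //.
- by rewrite -sa moved_perm.
by rewrite -sc moved_perm.
Qed.

End ThreeCycles.

(** * The graph of 3-cycles *)

Section ThreeCycleGraph.
Variable n : nat.
Implicit Types s t u v : 'S_n.
Implicit Types a b c d p q x y z : 'I_n.

(* On A_n, cag_adj x y is adj3 (sgval x) (sgval y); on 3-cycles, adj3 is the
   graph induced on the neighbourhood of 1. *)
Definition adj3 s t := is3cycle (t * s^-1).

Lemma adj3C s t : adj3 s t = adj3 t s.
Proof. by rewrite /adj3 -is3cycleV invMg invgK. Qed.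

Lemma adj3_irr s : ~~ adj3 s s.
Proof. by rewrite /adj3 mulgV is3cycle1. Qed.

Lemma adj3V s : is3cycle s -> adj3 s s^-1.
Proof.
case/is3cycleP=> a [b [c /cycle3_specV[ac cb ab ia ic ib iP]]].
apply/is3cycleP; exists a, b, c; split; rewrite ?permM ?ia ?ic ?ib // 1?eq_sym //.
by move=> p pa pb pc; rewrite permM !iP.
Qed.

Lemma adj3_share s t x : is3cycle s -> is3cycle t -> t != s ->
  s x != x -> t x = s x -> adj3 s t.
Proof.
move=> s3 t3 ts sx tx; have tx' : t x != x by rewrite tx.
have [xy yz xz _ _ sz sP] := cycle3_spec_moved s3 sx.
have [_ yw xw _ _ tw tP] := cycle3_spec_moved t3 tx'; rewrite tx in yw xw tw tP.
have wz : t (s x) != s (s x).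
  by apply: contra ts => /eqP tsx; apply/eqP; apply: cycle3_eq tsx.
have sw : s (t (s x)) = t (s x) by apply: sP; rewrite // eq_sym.
have tz : t (s (s x)) = s (s x) by apply: tP; rewrite // eq_sym.
apply/is3cycleP; exists (s x), (t (s x)), (s (s x)); split; rewrite ?permM //.
- exact: perm_invE sw.
- by rewrite tw; apply: perm_invE.
- by rewrite tz; apply: perm_invE.
move=> p py pw pz; rewrite permM.
have [-> | px] := eqVneq p x; first by rewrite tx permK.
by rewrite tP //; apply: perm_invE; apply: sP.
Qed.

Lemma moved_mulV s t : moved (t * s^-1) = [set p | t p != s p].
Proof. by apply/setP=> p; rewrite !inE permM (can2_eq (permKV s) (permK s)). Qed.

Lemma adj3_noshare s t : is3cycle s -> is3cycle t -> adj3 s t ->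
  (forall x, s x != x -> t x != s x) -> t = s^-1.
Proof.
move=> s3 t3 st noshare.
have Ems : moved s = moved (t * s^-1).
  apply/eqP; rewrite eqEcard (card_moved3 s3) (card_moved3 st) leqnn andbT.
  by apply/subsetP=> x; rewrite moved_mulV !inE => /noshare.
have fix_out x : s x = x -> t x = x.
  move=> sx; have : x \notin moved (t * s^-1) by rewrite -Ems inE sx eqxx.
  by rewrite moved_mulV inE negbK sx => /eqP.
have Emt : moved t = moved s.
  apply/eqP; rewrite eqEcard (card_moved3 s3) (card_moved3 t3) leqnn andbT.
  by apply/subsetP=> x; rewrite !inE; apply: contra => /eqP/fix_out->.
apply/permP=> x; have [sx | sx] := eqVneq (s x) x.
  by rewrite (perm_invE sx) fix_out.
have sxyz := cycle3_spec_moved s3 sx; have [_ _ _ _ _ sz _] := sxyz.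
have tx : x \in moved t by rewrite Emt inE.
rewrite inE in tx.
have : t x \in moved s by rewrite -Emt moved_perm Emt inE.
rewrite (moved_cycle3 sxyz) !inE (negbTE tx) (negbTE (noshare _ sx)) /=.
by move/eqP->; rewrite (perm_invE sz).
Qed.

Lemma adj3P s t : is3cycle s -> is3cycle t ->
  reflect (t = s^-1 \/ t != s /\ exists2 x, s x != x & t x = s x) (adj3 s t).
Proof.
move=> s3 t3; apply: (iffP idP) => [st | [-> | [ts [x sx tx]]]]; last 2 first.
- exact: adj3V.
- exact: adj3_share tx.
have [/existsP[x /andP[sx /eqP tx]] | noshare] :=
  boolP [exists x, (s x != x) && (t x == s x)].
  by right; split; [apply: contraTneq st => ->; rewrite adj3_irr | exists x].
left; apply: adj3_noshare => // x sx; apply: contraNneq noshare => tx.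
by apply/existsP; exists x; rewrite sx tx eqxx.
Qed.

End ThreeCycleGraph.

Section ArrowsOfThreeCycles.
Variable n : nat.
Hypothesis n_ge5 : 5 <= n.
Implicit Types s t u v : 'S_n.
Implicit Types a b c d p q x y : 'I_n.

Lemma ord_avoid4 a b c d : exists q, [&& q != a, q != b, q != c & q != d].
Proof.
have [|q _] := @exists_avoid _ 'I_n [:: a; b; c; d]; first by rewrite card_ord.
by rewrite !inE !negb_or; exists q.
Qed.

Lemma adj3V_no_common s u : is3cycle s -> is3cycle u -> ~~ (adj3 s u && adj3 s^-1 u).
Proof.
move=> s3 u3; apply/negP=> /andP[/(adj3P s3 u3)[-> | [us [x sx ux]]]].
  by rewrite (negbTE (adj3_irr _)).
have s3' : is3cycle s^-1 by rewrite is3cycleV.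
move/(adj3P s3' u3)=> [| [_ [p sp up]]].
  by rewrite invgK => us'; rewrite us' eqxx in us.
have sxyz := cycle3_spec_moved s3 sx; have [xy yz xz _ _ sz _] := sxyz.
have ux' : u x != x by rewrite ux.
have [_ _ xw _ _ _ _] := cycle3_spec_moved u3 ux'; rewrite ux in xw.
have : p \in moved s by rewrite inE; apply: contra sp => /eqP/perm_invE->.
rewrite (moved_cycle3 sxyz) !inE -orbA => /or3P[] /eqP pE; move: up; rewrite pE.
- by rewrite ux (perm_invE sz) => /eqP; rewrite (negbTE yz).
- by rewrite permK => /eqP; rewrite eq_sym (negbTE xw).
by rewrite permK -{2}ux => /perm_inj/eqP; rewrite eq_sym (negbTE xz).
Qed.

Lemma adj3_common s t : is3cycle s -> is3cycle t -> adj3 s t -> t != s^-1 ->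
  exists2 u, is3cycle u & adj3 s u && adj3 t u.
Proof.
move=> s3 t3 /(adj3P s3 t3)[-> | [ts [x sx tx]] _]; first by rewrite eqxx.
have tx' : t x != x by rewrite tx.
have [xy yz xz _ _ _ _] := cycle3_spec_moved s3 sx.
have [_ yw _ _ _ _ _] := cycle3_spec_moved t3 tx'; rewrite tx in yw.
have [q /and4P[qx qy qz qw]] := ord_avoid4 x (s x) (s (s x)) (t (s x)).
have yq : s x != q by rewrite eq_sym.
have xq : x != q by rewrite eq_sym.
have [_ _ _ ux uy _ _] := cyc3_spec xy yq xq; have u3 := is3cycle_cyc3 xy yq xq.
exists (cyc3 x (s x) q) => //; apply/andP; split.
  apply: adj3_share s3 u3 _ sx ux; apply: contraNneq qz => us.
  by rewrite -uy us.
apply: adj3_share t3 u3 _ tx' (etrans ux (esym tx)); apply: contraNneq qw => ut.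
by rewrite -uy ut.
Qed.

(* Arrows can be read off the graph: the 3-cycles sending x to s x are s, t and
   their common neighbours. *)
Lemma shared_arrowE s t u x : is3cycle s -> is3cycle t -> is3cycle u -> t != s ->
  s x != x -> t x = s x -> [|| u == s, u == t | adj3 s u && adj3 t u] = (u x == s x).
Proof.
move=> s3 t3 u3 ts sx tx; have tx' : t x != x by rewrite tx.
apply/idP/eqP => [|ux]; last first.
  have [-> | us] := eqVneq u s; first by [].
  have [-> | ut] := eqVneq u t; first by rewrite orbT.
  by rewrite (adj3_share s3 u3 us sx ux) (adj3_share t3 u3 ut tx' (etrans ux (esym tx))) !orbT.
case/or3P=> [/eqP-> // | /eqP-> // | /andP[su tu]].
have st := adj3_share s3 t3 ts sx tx.
have [us1 | [us [p sp up]]] := adj3P s3 u3 su.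
  by move: (adj3V_no_common s3 t3); rewrite st adj3C -us1 tu.
have [ut1 | [ut [q tq uq]]] := adj3P t3 u3 tu.
  by move: (adj3V_no_common t3 s3); rewrite adj3C st adj3C -ut1 su.
have sxyz := cycle3_spec_moved s3 sx; have [xy yz xz _ _ sz _] := sxyz.
have txyw := cycle3_spec_moved t3 tx'; rewrite tx in txyw.
have [_ yw xw _ _ tw _] := txyw.
have wz : t (s x) != s (s x).
  by apply: contra ts => /eqP tsx; apply/eqP; apply: cycle3_eq tsx.
have [pE | px] := eqVneq p x; first by rewrite -pE.
have [qE | qx] := eqVneq q x; first by move: uq; rewrite qE tx.
have : p \in moved s by rewrite inE.
rewrite (moved_cycle3 sxyz) !inE (negbTE px) /= => /orP[] /eqP pE; rewrite pE in up.
all: have : q \in moved t by rewrite inE.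
all: rewrite (moved_cycle3 txyw) !inE (negbTE qx) /= => /orP[] /eqP qE; rewrite qE in uq.
- by move: wz; rewrite -uq up eqxx.
- have := is3cycle_no_disjoint_arrows u3 up uq; rewrite tw /= !inE !(eq_sym _ x).
  by rewrite (eq_sym (s (s x))) (negbTE yz) (negbTE yw) (negbTE xy) (negbTE wz) (negbTE xz) (negbTE xw).
- have := is3cycle_no_disjoint_arrows u3 up uq; rewrite sz /= !inE !(eq_sym (s (s x))).
  by rewrite (negbTE yz) (negbTE yw) (negbTE xy) (negbTE wz) (negbTE xz) (negbTE xw).
by move: wz; rewrite (perm_inj (etrans up (etrans sz (esym (etrans uq tw))))) eqxx.
Qed.

Lemma arrow_rigid a b c d : a != b -> c != d ->
  (forall v, is3cycle v -> v a = b -> v c = d) -> c = a /\ d = b.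
Proof.
move=> ab cd H.
have [q1 /and4P[q1a q1b _ _]] := ord_avoid4 a b a b.
have [q2 /and4P[q2a q2b q21 _]] := ord_avoid4 a b q1 q1.
have bq1 : b != q1 by rewrite eq_sym.
have aq1 : a != q1 by rewrite eq_sym.
have bq2 : b != q2 by rewrite eq_sym.
have aq2 : a != q2 by rewrite eq_sym.
have [_ _ _ v1a v1b v1c v1P] := cyc3_spec ab bq1 aq1.
have [_ _ _ v2a v2b _ v2P] := cyc3_spec ab bq2 aq2.
have h1 := H _ (is3cycle_cyc3 ab bq1 aq1) v1a.
have h2 := H _ (is3cycle_cyc3 ab bq2 aq2) v2a.
have [ca | ca] := eqVneq c a; first by rewrite -h1 ca.
exfalso; have [cb | cb] := eqVneq c b.
  by move: h1 h2; rewrite cb v1b v2b => <- /eqP; rewrite (negbTE q21).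
have [cq | cq] := eqVneq c q1.
  have q12 : q1 != q2 by rewrite eq_sym.
  move: h1 h2; rewrite cq v1c (v2P _ q1a q1b q12) => <- /eqP.
  by rewrite eq_sym (negbTE aq1).
by move: h1; rewrite v1P // => /eqP; rewrite (negbTE cd).
Qed.

End ArrowsOfThreeCycles.

(** * Automorphisms of the graph of 3-cycles *)

Section ThreeCycleGraphAutomorphism.
Variable n : nat.
Hypothesis n_ge5 : 5 <= n.
Variable phi : 'S_n -> 'S_n.
Hypothesis phi3 : forall s, is3cycle s -> is3cycle (phi s).
Hypothesis phi_adj : forall s t, is3cycle s -> is3cycle t ->
  adj3 (phi s) (phi t) = adj3 s t.
Hypothesis phi_inj : forall s t, is3cycle s -> is3cycle t -> phi s = phi t -> s = t.
Implicit Types s t u v : 'S_n.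
Implicit Types a b c x y z : 'I_n.

Lemma phi_surj t : is3cycle t -> exists2 s, is3cycle s & phi s = t.
Proof.
move=> t3; pose C3 := [set s : 'S_n | is3cycle s].
have phiC3 : phi @: C3 = C3.
  apply/eqP; rewrite eqEcard card_in_imset ?leqnn ?andbT; last first.
    by move=> s1 s2; rewrite !inE; apply: phi_inj.
  by apply/subsetP=> _ /imsetP[s s3 ->]; rewrite /C3 !inE in s3 *; apply: phi3.
have : t \in phi @: C3 by rewrite phiC3 inE.
by case/imsetP=> s; rewrite inE => s3 ->; exists s.
Qed.

Lemma phi_eq s t : is3cycle s -> is3cycle t -> (phi s == phi t) = (s == t).
Proof. by move=> s3 t3; apply/eqP/eqP=> [|-> //]; apply: phi_inj. Qed.

Lemma inverse3_char s t : is3cycle s -> is3cycle t ->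
  t = s^-1 <-> adj3 s t /\ (forall u, is3cycle u -> ~~ (adj3 s u && adj3 t u)).
Proof.
move=> s3 t3; split=> [-> | [st no_common]].
  by split=> [|u u3]; [apply: adj3V | rewrite adj3V_no_common].
apply/eqP; apply: contraT => ts1.
have [u u3 common] := adj3_common n_ge5 s3 t3 st ts1.
by have := no_common u u3; rewrite common.
Qed.

Lemma phiV s : is3cycle s -> phi s^-1 = (phi s)^-1.
Proof.
move=> s3; have s3' : is3cycle s^-1 by rewrite is3cycleV.
apply/(inverse3_char (phi3 s3) (phi3 s3')); split; first by rewrite phi_adj // adj3V.
by move=> _ /phi_surj[u u3 <-]; rewrite !phi_adj // adj3V_no_common.
Qed.

Lemma exists_image_arrow x y : x != y -> exists2 a : 'I_n * 'I_n,
  a.1 != a.2 & forall u, is3cycle u -> (u x == y) = (phi u a.1 == a.2).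
Proof.
(* Two 3-cycles through x -> y are adjacent and not inverse, hence so are their
   images, which therefore share an arrow; shared_arrowE carries the 3-cycles
   through x -> y onto those through this arrow. *)
move=> xy.
have [q1 /and4P[q1x q1y _ _]] := ord_avoid4 n_ge5 x y x y.
have [q2 /and4P[q2x q2y q21 _]] := ord_avoid4 n_ge5 x y q1 q1.
have yq1 : y != q1 by rewrite eq_sym.
have xq1 : x != q1 by rewrite eq_sym.
have yq2 : y != q2 by rewrite eq_sym.
have xq2 : x != q2 by rewrite eq_sym.
have [_ _ _ sx sy sq _] := cyc3_spec xy yq1 xq1.
have [_ _ _ tx ty _ _] := cyc3_spec xy yq2 xq2.
have s3 := is3cycle_cyc3 xy yq1 xq1; have t3 := is3cycle_cyc3 xy yq2 xq2.
set s := cyc3 x y q1 in sx sy sq s3 *; set t := cyc3 x y q2 in tx ty t3 *.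
have sx' : s x != x by rewrite sx eq_sym.
have tsx : t x = s x by rewrite sx tx.
have ts : t != s by apply: contraNneq q21 => ts; rewrite -ty -sy ts.
have phi_ts1 : phi t != (phi s)^-1.
  rewrite -phiV // phi_eq ?is3cycleV //; apply: contraNneq yq1 => tsV.
  by rewrite -tx tsV (perm_invE sq).
have := adj3_share s3 t3 ts sx' tsx; rewrite -phi_adj //.
case/(adj3P (phi3 s3) (phi3 t3)) => [phi_tsV | [phi_ts [x' sx'' tx'']]].
  by rewrite phi_tsV eqxx in phi_ts1.
exists (x', phi s x'); first by rewrite eq_sym.
move=> u u3; rewrite -sx -(shared_arrowE s3 t3 u3 ts sx' tsx).
rewrite -(shared_arrowE (phi3 s3) (phi3 t3) (phi3 u3) phi_ts sx'' tx'').
by rewrite !phi_eq // !phi_adj.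
Qed.

Definition is_image_arrow x y (a : 'I_n * 'I_n) :=
  (a.1 != a.2) && [forall u : 'S_n, is3cycle u ==> ((u x == y) == (phi u a.1 == a.2))].

(* (x, y) is a junk value, used only when x = y. *)
Definition image_arrow x y := odflt (x, y) [pick a | is_image_arrow x y a].

Lemma image_arrowP x y : x != y -> is_image_arrow x y (image_arrow x y).
Proof.
move=> xy; rewrite /image_arrow; case: pickP => [a // | no_image].
have [a a12 aE] := exists_image_arrow xy.
case/negP: (negbT (no_image a)); rewrite /is_image_arrow a12.
by apply/forallP=> u; apply/implyP=> u3; rewrite aE.
Qed.

Lemma image_arrow_neq x y : x != y -> (image_arrow x y).1 != (image_arrow x y).2.
Proof. by case/image_arrowP/andP. Qed.

Lemma image_arrowE x y u : x != y -> is3cycle u ->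
  (u x == y) = (phi u (image_arrow x y).1 == (image_arrow x y).2).
Proof. by move/image_arrowP=> /andP[_ /forallP/(_ u)/implyP imp] /imp/eqP. Qed.

Lemma image_arrow_apply x y u : x != y -> is3cycle u -> u x = y ->
  phi u (image_arrow x y).1 = (image_arrow x y).2.
Proof. by move=> xy u3 /eqP; rewrite (image_arrowE xy u3) => /eqP. Qed.

Lemma image_arrow_rev x y : x != y ->
  image_arrow y x = ((image_arrow x y).2, (image_arrow x y).1).
Proof.
move=> xy; have yx : y != x by rewrite eq_sym.
have rev_neq : (image_arrow x y).2 != (image_arrow x y).1 by rewrite eq_sym image_arrow_neq.
suff [-> ->] : (image_arrow x y).2 = (image_arrow y x).1 /\
               (image_arrow x y).1 = (image_arrow y x).2.
  by case: (image_arrow y x).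
apply: (arrow_rigid n_ge5 (image_arrow_neq yx) rev_neq) => _ /phi_surj[u u3 <-].
move/eqP; rewrite -image_arrowE // => /eqP uyx.
have u3' : is3cycle u^-1 by rewrite is3cycleV.
have := image_arrow_apply xy u3' (perm_invE uyx).
by rewrite phiV // => <-; rewrite permKV.
Qed.

Lemma image_arrow_inj x y x' y' : x != y -> x' != y' ->
  image_arrow x y = image_arrow x' y' -> x = x' /\ y = y'.
Proof.
move=> xy xy' E; apply: (arrow_rigid n_ge5 xy' xy) => u u3 /eqP.
by rewrite (image_arrowE xy' u3) -E -image_arrowE // => /eqP.
Qed.

Definition image_edge x y := [set (image_arrow x y).1; (image_arrow x y).2].

Lemma image_edgeC x y : x != y -> image_edge y x = image_edge x y.
Proof. by move=> xy; rewrite /image_edge image_arrow_rev // setUC. Qed.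

Lemma card_image_edge x y : x != y -> #|image_edge x y| = 2.
Proof. by move=> xy; rewrite cards2 image_arrow_neq. Qed.

Lemma image_edge_neq x y z : x != y -> x != z -> y != z -> image_edge x y != image_edge x z.
Proof.
move=> xy xz yz; apply/eqP; case/(set2_inj (image_arrow_neq xy)) => [[e1 e2] | [e1 e2]].
  have [_ yz'] := image_arrow_inj xy xz (injective_projections _ _ e1 e2).
  by rewrite yz' eqxx in yz.
have zx : z != x by rewrite eq_sym.
have := image_arrow_rev xz; rewrite -e1 -e2 -surjective_pairing => e.
have [xz' _] := image_arrow_inj xy zx (esym e); by rewrite xz' eqxx in xz.
Qed.

Lemma image_edge_moved x y u : x != y -> is3cycle u -> u x = y ->
  image_edge x y \subset moved (phi u).
Proof.
move=> xy u3 uxy; have e := image_arrow_apply xy u3 uxy.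
apply/subsetP=> _ /set2P[] ->; rewrite inE.
  by rewrite e eq_sym image_arrow_neq.
by rewrite -{2}e (inj_eq perm_inj) eq_sym image_arrow_neq.
Qed.

Lemma image_edges_meet x y z : x != y -> x != z -> y != z ->
  image_edge x y :&: image_edge x z != set0.
Proof.
move=> xy xz yz; apply/negP=> /eqP disj; have zx : z != x by rewrite eq_sym.
have u3 := is3cycle_cyc3 xy yz xz; have [_ _ _ ux _ uz _] := cyc3_spec xy yz xz.
have sub : image_edge x y :|: image_edge x z \subset moved (phi (cyc3 x y z)).
  by rewrite subUset (image_edge_moved xy u3 ux) -image_edgeC ?(image_edge_moved zx u3 uz).
have := subset_leq_card sub; rewrite cardsU disj cards0 subn0 !card_image_edge //.
by rewrite card_moved3 ?phi3.
Qed.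

Lemma exists_center x : exists c, [forall y, (y != x) ==> (c \in image_edge x y)].
Proof.
have [c cP] : exists c, {in predC1 x, forall y, c \in image_edge x y}.
  apply: common_point => [|y /= yx|y z /= yx zx yz].
  - by rewrite cardC1 card_ord -subn1 ltn_subRL.
  - by rewrite card_image_edge // eq_sym.
  have xy : x != y by rewrite eq_sym; exact: yx.
  have xz : x != z by rewrite eq_sym; exact: zx.
  by split; [apply: image_edge_neq | apply: image_edges_meet].
by exists c; apply/forallP=> y; apply/implyP; apply: cP.
Qed.

Definition center x := xchoose (exists_center x).

Lemma center_mem x y : y != x -> center x \in image_edge x y.
Proof. by move=> yx; have /forallP/(_ y)/implyP := xchooseP (exists_center x); apply. Qed.

Lemma center_inj : injective center.
Proof.
(* Otherwise the image edges of the triangle a, b, y would provide four points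
   moved by the 3-cycle phi (cyc3 a b y). *)
move=> a b ab_center; apply/eqP; apply: contraT => ab.
have [y /and4P[ya yb _ _]] := ord_avoid4 n_ge5 a b a b.
have ba : b != a by rewrite eq_sym.
have ay : a != y by rewrite eq_sym.
have by' : b != y by rewrite eq_sym.
have c_by := center_mem yb; rewrite -ab_center in c_by.
move: (center a) (center_mem ba) c_by (center_mem ya) => c c_ab c_by c_ay.
have [r1 r1c E1] := cards2_mem (card_image_edge ab) c_ab.
have [r2 r2c E2] := cards2_mem (card_image_edge by') c_by.
have [r3 r3c E3] := cards2_mem (card_image_edge ay) c_ay.
have r12 : r1 != r2.
  by apply: contra (image_edge_neq ba by' ay) => /eqP r12; rewrite image_edgeC // E1 E2 r12.
have r13 : r1 != r3.
  by apply: contra (image_edge_neq ab ay by') => /eqP r13; rewrite E1 E3 r13.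
have r23 : r2 != r3.
  apply: contra (image_edge_neq yb ya ba) => /eqP r23.
  by rewrite (image_edgeC by') (image_edgeC ay) E2 E3 r23.
have u3 := is3cycle_cyc3 ab by' ay; have [_ _ _ ua ub uy _] := cyc3_spec ab by' ay.
have moved4 : {subset [:: c; r1; r2; r3] <= moved (phi (cyc3 a b y))}.
  move=> p; rewrite !in_cons in_nil orbF => /or4P[] /eqP->.
  - by apply: (subsetP (image_edge_moved ab u3 ua)).
  - by apply: (subsetP (image_edge_moved ab u3 ua)); rewrite E1 !inE eqxx orbT.
  - by apply: (subsetP (image_edge_moved by' u3 ub)); rewrite E2 !inE eqxx orbT.
  by apply: (subsetP (image_edge_moved ya u3 uy)); rewrite image_edgeC // E3 !inE eqxx orbT.
suff /(uniq_moved_le3 (phi3 u3))/(_ moved4) : uniq [:: c; r1; r2; r3] by [].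
by rewrite /= !inE !negb_or !(eq_sym c) r1c r2c r3c r12 r13 r23.
Qed.

Definition sigma : 'S_n := perm center_inj.

Lemma image_edgeE x y : x != y -> image_edge x y = [set sigma x; sigma y].
Proof.
move=> xy; apply: cards2_eq; rewrite ?card_image_edge ?(inj_eq perm_inj) //.
  by rewrite permE center_mem // eq_sym.
by rewrite permE -image_edgeC // center_mem.
Qed.

Definition forward x y := image_arrow x y == (sigma x, sigma y).

Lemma image_arrow_orient x y : x != y ->
  image_arrow x y = if forward x y then (sigma x, sigma y) else (sigma y, sigma x).
Proof.
move=> xy; rewrite /forward; case: eqP => // not_fwd.
have := image_edgeE xy; case/(set2_inj (image_arrow_neq xy)) => -[e1 e2].
  by case: not_fwd; rewrite [image_arrow x y]surjective_pairing e1 e2.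
by rewrite [image_arrow x y]surjective_pairing e1 e2.
Qed.

Lemma forwardC x y : x != y -> forward y x = forward x y.
Proof.
move=> xy; rewrite /forward image_arrow_rev // [image_arrow x y]surjective_pairing.
by rewrite !xpair_eqE andbC.
Qed.

Lemma forward_path x y z : x != y -> y != z -> x != z -> forward x y = forward y z.
Proof.
move=> xy yz xz; have u3 := is3cycle_cyc3 xy yz xz.
have [_ _ _ ux uy _ _] := cyc3_spec xy yz xz.
have hxy := image_arrow_apply xy u3 ux; have hyz := image_arrow_apply yz u3 uy.
rewrite !image_arrow_orient // in hxy hyz.
case: (forward x y) hxy; case: (forward y z) hyz => //= hyz hxy; exfalso.
  by move/eqP: (perm_inj (etrans hxy (esym hyz))); rewrite (inj_eq perm_inj) (negbTE xz).
by move/eqP: (etrans (esym hxy) hyz); rewrite (inj_eq perm_inj) (negbTE xz).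
Qed.

Lemma forward_src a b c : b != a -> c != a -> forward a b = forward a c.
Proof.
move=> ba ca; have [-> // | bc] := eqVneq b c.
have ab : a != b by rewrite eq_sym.
have cb : c != b by rewrite eq_sym.
have ac : a != c by rewrite eq_sym.
by rewrite -(forward_path ca ab cb) (forwardC ac).
Qed.

Lemma forward_const a b c d : a != b -> c != d -> forward a b = forward c d.
Proof.
move=> ab cd; have ba : b != a by rewrite eq_sym.
have dc : d != c by rewrite eq_sym.
have [ca | ca] := eqVneq c a; first by subst c; apply: forward_src.
have ac : a != c by rewrite eq_sym.
by rewrite (forward_src ba ca) -(forwardC ac) (forward_src ac dc).
Qed.

Lemma phiE u a b : a != b -> is3cycle u ->
  phi u = if forward a b then u ^ sigma else (u ^ sigma)^-1.
Proof.
move=> ab u3; have /is3cycleP[x [y [z [xy yz xz ux uy uz _]]]] := u3.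
have zx : z != x by rewrite eq_sym.
have img p q : u p = q -> p != q ->
    phi u (if forward a b then sigma p else sigma q) =
    (if forward a b then sigma q else sigma p).
  move=> upq pq; have := image_arrow_apply pq u3 upq.
  by rewrite image_arrow_orient // (forward_const pq ab); case: (forward a b).
have hxy := img _ _ ux xy; have hzx := img _ _ uz zx; have hyz := img _ _ uy yz.
case: (forward a b) hxy hyz hzx => /= hxy hyz hzx.
  apply: (cycle3_eq (x := sigma x));
    by rewrite ?is3cycleJ ?permJ ?ux ?uy ?phi3 ?(inj_eq perm_inj) // eq_sym.
have iy : (u ^ sigma)^-1 (sigma y) = sigma x by apply: perm_invE; rewrite permJ ux.
have ix : (u ^ sigma)^-1 (sigma x) = sigma z by apply: perm_invE; rewrite permJ uz.
apply: (cycle3_eq (x := sigma y));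
  by rewrite ?is3cycleV ?is3cycleJ ?iy ?ix ?phi3 ?(inj_eq perm_inj) // eq_sym.
Qed.

End ThreeCycleGraphAutomorphism.

Theorem three_cycle_graph_aut n (phi : 'S_n -> 'S_n) : 5 <= n ->
  (forall s, is3cycle s -> is3cycle (phi s)) ->
  (forall s t, is3cycle s -> is3cycle t -> adj3 (phi s) (phi t) = adj3 s t) ->
  (forall s t, is3cycle s -> is3cycle t -> phi s = phi t -> s = t) ->
  exists sigma : 'S_n, exists e : bool, forall u, is3cycle u ->
    phi u = if e then (u ^ sigma)^-1 else u ^ sigma.
Proof.
move=> n_ge5 phi3 phi_adj phi_inj; pose a : 'I_n := Ordinal (leq_trans (isT : 0 < 5) n_ge5).
have [b /and4P[ba _ _ _]] := ord_avoid4 n_ge5 a a a a.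
exists (sigma n_ge5 phi3 phi_adj phi_inj), (~~ forward n_ge5 phi3 phi_adj phi_inj a b).
have ab : a != b by rewrite eq_sym.
by move=> u u3; rewrite if_neg (phiE n_ge5 phi3 phi_adj phi_inj ab u3).
Qed.

Lemma exists_3cycle n : 5 <= n -> exists s : 'S_n, is3cycle s.
Proof.
move=> n_ge5; pose a : 'I_n := Ordinal (leq_trans (isT : 0 < 5) n_ge5).
have [b /and4P[ba _ _ _]] := ord_avoid4 n_ge5 a a a a.
have [c /and4P[ca cb _ _]] := ord_avoid4 n_ge5 a b a b.
by exists (cyc3 a b c); apply: is3cycle_cyc3; rewrite // eq_sym.
Qed.

Lemma gen_3cycles n : 5 <= n -> <<[set s : 'S_n | is3cycle s]>> = 'Alt_('I_n).
Proof.
move=> n_ge5; set G := <<_>>.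
have sGA : G \subset 'Alt_('I_n).
  by rewrite gen_subG; apply/subsetP=> s; rewrite inE; apply: is3cycle_Alt.
have nGA : 'Alt_('I_n) \subset 'N(G).
  apply: norms_gen; apply/subsetP=> g _; rewrite inE.
  by apply/subsetP=> _ /imsetP[s s3 ->]; rewrite inE in s3; rewrite inE is3cycleJ.
have Alt_simple : simple 'Alt_('I_n) by apply: simple_Alt5; rewrite card_ord.
have [_ /(_ [group of G])] := simpleP _ Alt_simple.
case=> //; first by rewrite /normal sGA nGA.
move=> /= G1; have [s s3] := exists_3cycle n_ge5.
have : s \in G by apply: mem_gen; rewrite inE.
by rewrite G1 inE => /eqP s1; move: s3; rewrite s1 (negbTE (is3cycle1 _)).
Qed.

Lemma conj_fix_arrows n (sg : 'S_n) (e : bool) a b c :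
  5 <= n -> a != b -> b != c -> a != c ->
  (forall v, is3cycle v -> v a = b \/ v b = c ->
     (if e then (v ^ sg)^-1 else v ^ sg) = v) ->
  e = false /\ sg = 1.
Proof.
move=> n_ge5 ab bc ac; case: e => /= F.
  have h1 v : is3cycle v -> v a = b -> v (sg b) = sg a.
    by move=> v3 vab; rewrite -{1}(F v v3 (or_introl vab)) -vab -(permJ v sg) permK.
  have h2 v : is3cycle v -> v b = c -> v (sg c) = sg b.
    by move=> v3 vbc; rewrite -{1}(F v v3 (or_intror vbc)) -vbc -(permJ v sg) permK.
  have [ba cb] : sg b != sg a /\ sg c != sg b by split; rewrite (inj_eq perm_inj) eq_sym.
  have [e1 _] := arrow_rigid n_ge5 ab ba h1; have [_ e2] := arrow_rigid n_ge5 bc cb h2.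
  by move: ac; rewrite -e1 e2 eqxx.
have h1 v : is3cycle v -> v a = b -> v (sg a) = sg b.
  by move=> v3 vab; rewrite -{1}(F v v3 (or_introl vab)) permJ vab.
have h2 v : is3cycle v -> v b = c -> v (sg b) = sg c.
  by move=> v3 vbc; rewrite -{1}(F v v3 (or_intror vbc)) permJ vbc.
have [ab' bc'] : sg a != sg b /\ sg b != sg c by split; rewrite (inj_eq perm_inj).
have [sa _] := arrow_rigid n_ge5 ab ab' h1; have [sb sc] := arrow_rigid n_ge5 bc bc' h2.
split=> //; apply/permP=> q; rewrite perm1.
have [-> // | qa] := eqVneq q a; have [-> // | qb] := eqVneq q b.
have bq : b != q by rewrite eq_sym.
have aq : a != q by rewrite eq_sym.
have v3 := is3cycle_cyc3 ab bq aq; have [_ _ _ va _ vq _] := cyc3_spec ab bq aq.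
apply: (@perm_inj _ (cyc3 a b q)).
by rewrite -{1}(F _ v3 (or_introl va)) permJ vq sa.
Qed.

(** * The complete alternating group graph *)

Section CompleteAlternatingGroupGraph.
Variable n : nat.
Hypothesis n_ge5 : 5 <= n.
Local Notation V := (V n).
Local Notation Alt := ('Alt_('I_n))%G.
Implicit Types (x y z : V) (s u v : 'S_n) (f k : {perm V}).

Lemma sgval_mul x y : sgval (x * y) = sgval x * sgval y. Proof. by []. Qed.
Lemma sgval_inv x : sgval x^-1 = (sgval x)^-1. Proof. by []. Qed.
Lemma sgval_subg s : s \in Alt -> sgval (subg Alt s) = s. Proof. exact: subgK. Qed.

Lemma cag_adjE x y : cag_adj x y = adj3 (sgval x) (sgval y). Proof. by []. Qed.

Lemma cag_adj1 y : cag_adj 1 y = is3cycle (sgval y).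
Proof. by rewrite cag_adjE /adj3 invg1 mulg1. Qed.

Lemma CAGAutP f :
  reflect (forall x y, cag_adj (f x) (f y) = cag_adj x y) (f \in CAGAut n).
Proof.
rewrite inE; apply: (iffP forallP) => [fA x y | fA x].
  by have /forallP/(_ y)/eqP := fA x.
by apply/forallP=> y; rewrite fA.
Qed.

Lemma CAGAut_group_set : group_set (CAGAut n).
Proof.
apply/group_setP; split; first by apply/CAGAutP=> x y; rewrite !perm1.
by move=> f k /CAGAutP fA /CAGAutP kA; apply/CAGAutP=> x y; rewrite !permM kA fA.
Qed.

Canonical CAGAut_group := Group CAGAut_group_set.

Definition rmul_perm (g : V) : {perm V} := perm (mulIg g).

Lemma rmul_permE g x : rmul_perm g x = x * g. Proof. by rewrite permE. Qed.

Lemma rmul_permM : {morph rmul_perm : g h / g * h}.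
Proof. by move=> g h; apply/permP=> x; rewrite permM !rmul_permE mulgA. Qed.

Lemma rmul_perm1 : rmul_perm 1 = 1.
Proof. by apply/permP=> x; rewrite rmul_permE mulg1 perm1. Qed.

Canonical rmul_morphism := @Morphism _ _ [set: V] rmul_perm (in2W rmul_permM).

Lemma injm_rmul : 'injm rmul_morphism.
Proof.
apply/injmP=> g h _ _ /= /(congr1 (fun f : {perm V} => f 1)).
by rewrite !rmul_permE !mul1g.
Qed.

Lemma rmul_perm_CAG g : rmul_perm g \in CAGAut n.
Proof. by apply/CAGAutP=> x y; rewrite !rmul_permE !cag_adjE /adj3 invMg mulgA mulgK. Qed.

Lemma RA_im : RA n = rmul_morphism @* [set: V].
Proof.
apply/setP=> f; rewrite morphimEdom inE; apply/existsP/imsetP => [[g /forallP fg] | [g _ ->]].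
  by exists g; rewrite ?inE //; apply/permP=> x; rewrite /= rmul_permE; apply/eqP.
by exists g; apply/forallP=> x; rewrite /= rmul_permE.
Qed.

Definition alt_conj s x : V := subg Alt (sgval x ^ s).

Lemma alt_conjE s x : sgval (alt_conj s x) = sgval x ^ s.
Proof.
rewrite sgval_subg // memJ_norm ?subgP //.
by apply: (subsetP (Alt_norm _)); rewrite inE.
Qed.

Lemma alt_conj_inj s : injective (alt_conj s).
Proof. by move=> x y /(congr1 sgval); rewrite !alt_conjE => /conjg_inj/subg_inj. Qed.

Lemma alt_conj1 s : alt_conj s 1 = 1.
Proof. by apply: subg_inj; rewrite alt_conjE conj1g. Qed.

Lemma alt_conjM s : {morph alt_conj s : x y / x * y}.
Proof. by move=> x y; apply: subg_inj; rewrite sgval_mul !alt_conjE conjMg. Qed.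

Definition conj_perm s : {perm V} := perm (@alt_conj_inj s).

Lemma conj_permE s x : conj_perm s x = alt_conj s x. Proof. by rewrite permE. Qed.

Lemma conj_permM : {morph conj_perm : s u / s * u}.
Proof.
move=> s u; apply/permP=> x; rewrite permM !conj_permE.
by apply: subg_inj; rewrite !alt_conjE conjgM.
Qed.

Canonical conj_morphism := @Morphism _ _ [set: 'S_n] conj_perm (in2W conj_permM).

Lemma conj_perm_CAG s : conj_perm s \in CAGAut n.
Proof.
apply/CAGAutP=> x y; rewrite !conj_permE !cag_adjE /adj3 !alt_conjE -conjVg -conjMg.
exact: is3cycleJ.
Qed.

Lemma InnS_im : InnS n = conj_morphism @* [set: 'S_n].
Proof.
apply/setP=> f; rewrite morphimEdom inE; apply/existsP/imsetP => [[s /forallP fs] | [s _ ->]].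
  exists s; rewrite ?inE //; apply/permP=> x /=; rewrite conj_permE.
  by apply: subg_inj; rewrite alt_conjE; apply/eqP.
by exists s; apply/forallP=> x; rewrite /= conj_permE alt_conjE.
Qed.

Lemma injm_conj : 'injm conj_morphism.
Proof.
apply/injmP=> s u _ _ /= su.
have conj_fix v : is3cycle v -> v ^ (s * u^-1) = v.
  move=> v3; have := congr1 (fun f : {perm V} => sgval (f (subg Alt v))) su.
  by rewrite /= !conj_permE !alt_conjE sgval_subg ?is3cycle_Alt // conjgM => ->; rewrite conjgK.
have [w /is3cycleP[a [b [c [ab bc ac _ _ _ _]]]]] := exists_3cycle n_ge5.
have [_ /eqP] := @conj_fix_arrows _ (s * u^-1) false _ _ _ n_ge5 ab bc ac
  (fun v v_3cycle _ => conj_fix v v_3cycle).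
by rewrite -eq_mulgV1 => /eqP.
Qed.

Lemma hinvE x : hinv n x = x^-1. Proof. by rewrite permE. Qed.

Lemma hinv_CAG : hinv n \in CAGAut n.
Proof.
apply/CAGAutP=> x y; rewrite !hinvE !cag_adjE /adj3 !sgval_inv (invgK (sgval x)).
have -> : (sgval y)^-1 * sgval x = ((sgval y * (sgval x)^-1)^-1) ^ sgval x.
  by rewrite conjgE invMg invgK !mulgA mulVg mul1g.
by rewrite is3cycleJ is3cycleV.
Qed.

Lemma hinvV : (hinv n)^-1 = hinv n.
Proof. by apply/permP=> x; apply: (@perm_inj _ (hinv n)); rewrite permKV !hinvE invgK. Qed.

Lemma order_hinv : #[hinv n] = 2.
Proof.
have [w w3] := exists_3cycle n_ge5.
have hinv_neq1 : hinv n != 1.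
  apply: (contraTneq _ w3) => /(congr1 (fun f : {perm V} => sgval (f (subg Alt w)))).
  rewrite /= hinvE perm1 sgval_inv sgval_subg ?is3cycle_Alt // => wV.
  apply/negP=> /is3cycleP[a [b [c [_ bc _ wa _ wc _]]]].
  by move: (perm_invE wc); rewrite wV wa => /eqP; rewrite (negbTE bc).
apply/eqP; rewrite eqn_leq order_gt1 hinv_neq1 andbT dvdn_leq //.
by rewrite order_dvdn expgS expg1 -{1}hinvV mulVg.
Qed.

Local Notation RAg := (rmul_morphism @* [set: V])%G.
Local Notation InnSg := (conj_morphism @* [set: 'S_n])%G.

Lemma RA_norm_InnS : InnSg \subset 'N(RAg).
Proof.
apply/subsetP=> _ /morphimP[s _ _ ->]; rewrite inE.
apply/subsetP=> _ /imsetP[_ /morphimP[g _ _ ->] ->].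
have -> : rmul_perm g ^ conj_perm s = rmul_perm (alt_conj s g).
  apply/permP=> x; rewrite conjgE !permM rmul_permE !conj_permE alt_conjM.
  by rewrite -conj_permE permKV rmul_permE.
by apply: mem_morphim; rewrite inE.
Qed.

Lemma RA_InnS_TI : RAg :&: InnSg = 1.
Proof.
apply/trivgP/subsetP=> _ /setIP[/morphimP[g _ _ ->] /morphimP[s _ _]].
move/(congr1 (fun f : {perm V} => f 1)); rewrite /= rmul_permE conj_permE mul1g alt_conj1 => ->.
by rewrite rmul_perm1 set11.
Qed.

Lemma hinv_norm : <[hinv n]> \subset 'N(RAg <*> InnSg).
Proof.
rewrite cycle_subG inE /joing -genJ gen_subG conjUg subUset.
apply/andP; split; apply/subsetP=> _ /imsetP[_ /morphimP[g _ _ ->] ->].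
  have -> : rmul_perm g ^ hinv n = conj_perm (sgval g) * rmul_perm g^-1.
    apply/permP=> x; rewrite conjgE hinvV !permM !rmul_permE !hinvE conj_permE.
    apply: subg_inj; rewrite !(sgval_inv, sgval_mul) alt_conjE invMg invgK.
    by rewrite conjgE !mulgA mulgK.
  by rewrite groupM // mem_gen // inE mem_morphim ?inE ?orbT.
have -> : conj_perm g ^ hinv n = conj_perm g.
  apply/permP=> x; rewrite conjgE hinvV !permM !hinvE !conj_permE.
  by apply: subg_inj; rewrite sgval_inv !alt_conjE sgval_inv conjVg invgK.
by rewrite mem_gen // inE mem_morphim ?inE ?orbT.
Qed.

Lemma hinv_notin : hinv n \notin RAg <*> InnSg.
Proof.
(* Otherwise the inversion would agree on 3-cycles with a conjugation. *)
rewrite -(sdprodEY RA_norm_InnS RA_InnS_TI) (sdprodE RA_norm_InnS RA_InnS_TI).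
apply/negP=> /mulsgP[_ _ /morphimP[g _ _ ->] /morphimP[s _ _ ->] hE].
have hx x : x^-1 = alt_conj s (x * g).
  by have := congr1 (fun f : {perm V} => f x) hE; rewrite /= hinvE permM rmul_permE conj_permE.
have g1 : g = 1 by apply: (@alt_conj_inj s); rewrite alt_conj1 -[g]mul1g -hx invg1.
have [w /is3cycleP[a [b [c [ab bc ac _ _ _ _]]]]] := exists_3cycle n_ge5.
suff : true = false /\ s = 1 by case.
apply: (conj_fix_arrows n_ge5 ab bc ac) => v v3 _ /=; have := congr1 sgval (hx (subg Alt v)).
by rewrite g1 mulg1 sgval_inv alt_conjE sgval_subg ?is3cycle_Alt // => <-; rewrite invgK.
Qed.

Lemma hinv_TI : (RAg <*> InnSg) :&: <[hinv n]> = 1.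
Proof.
rewrite setIC prime_TIg ?cycle_subG ?hinv_notin //.
by rewrite -orderE order_hinv.
Qed.

Lemma CAGAut_fix1_3cycles k : k \in CAGAut n -> k 1 = 1 ->
  exists sg : 'S_n, exists e : bool, forall u, is3cycle u ->
    sgval (k (subg Alt u)) = if e then (u ^ sg)^-1 else u ^ sg.
Proof.
move=> /CAGAutP kA k1; apply: three_cycle_graph_aut n_ge5 _ _ _ => [s s3 | s u s3 u3 | s u s3 u3].
- by rewrite -cag_adj1 -k1 kA cag_adj1 sgval_subg ?is3cycle_Alt.
- by rewrite -cag_adjE kA cag_adjE !sgval_subg ?is3cycle_Alt.
move/subg_inj/perm_inj/(congr1 sgval).
by rewrite !sgval_subg ?is3cycle_Alt.
Qed.

Lemma CAGAut_fix1_rigid k w : k \in CAGAut n -> k 1 = 1 -> is3cycle w ->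
  (forall v, is3cycle v -> (v == w) || adj3 w v -> k (subg Alt v) = subg Alt v) ->
  forall v, is3cycle v -> k (subg Alt v) = subg Alt v.
Proof.
move=> kA k1 w3 k_fix; have [sg [e ksg]] := CAGAut_fix1_3cycles kA k1.
have [e0 sg1] : e = false /\ sg = 1.
  have /is3cycleP[a [b [c [ab bc ac wa wb _ _]]]] := w3.
  apply: (conj_fix_arrows n_ge5 ab bc ac) => v v3 v_arrow.
  rewrite -(ksg v v3) k_fix ?sgval_subg ?is3cycle_Alt //.
  have [-> | vw] := eqVneq v w; first by apply/orP; left; apply/eqP.
  apply/orP; right; case: v_arrow => [va | vb].
    by apply: (adj3_share (x := a) w3 v3 vw); rewrite wa ?va // eq_sym.
  by apply: (adj3_share (x := b) w3 v3 vw); rewrite wb ?vb // eq_sym.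
move=> v v3; apply: subg_inj.
by rewrite ksg // e0 sg1 conjg1 sgval_subg ?is3cycle_Alt.
Qed.

Definition fixes_ball f x := (f x == x) && [forall y, cag_adj x y ==> (f y == y)].

Lemma fixes_ball_step f x s : f \in CAGAut n -> is3cycle s ->
  fixes_ball f x -> fixes_ball f (subg Alt s * x).
Proof.
(* Translate y to 1: x becomes s^-1, whose closed neighbourhood stays fixed. *)
move=> fA s3 /andP[/eqP fx /forallP fN]; set y := subg Alt s * x.
have sA := is3cycle_Alt s3.
have sgval_y : sgval y = s * sgval x by rewrite /y sgval_mul sgval_subg.
have fy : f y = y.
  by apply/eqP/(implyP (fN y)); rewrite cag_adjE /adj3 sgval_y mulgK.
have f_nbhd v : is3cycle v -> (v == s^-1) || adj3 s^-1 v ->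
    f (subg Alt v * y) = subg Alt v * y.
  move=> v3; have vA := is3cycle_Alt v3.
  have sgval_vy : sgval (subg Alt v * y) = v * s * sgval x.
    by rewrite sgval_mul sgval_subg // sgval_y mulgA.
  case/orP=> [/eqP vE | sv].
    have -> : subg Alt v * y = x by apply: subg_inj; rewrite sgval_vy vE mulVg mul1g.
    exact: fx.
  apply/eqP/(implyP (fN _)); rewrite cag_adjE /adj3 sgval_vy (mulgK (sgval x)).
  by move: sv; rewrite /adj3 invgK.
pose k := rmul_perm y * f * rmul_perm y^-1.
have kA : k \in CAGAut n by rewrite !groupM ?rmul_perm_CAG.
have kE z : k z = f (z * y) * y^-1 by rewrite !permM !rmul_permE.
have k_fix z : f (z * y) = z * y -> k z = z by move=> fz; rewrite kE fz mulgK.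
have k1 : k 1 = 1 by apply: k_fix; rewrite mul1g.
have w3 : is3cycle s^-1 by rewrite is3cycleV.
have k3 := CAGAut_fix1_rigid kA k1 w3 (fun v hv hvw => k_fix _ (f_nbhd v hv hvw)).
rewrite /fixes_ball fy eqxx /=; apply/forallP=> t; apply/implyP=> yt.
have u3 : is3cycle (sgval t * (sgval y)^-1) by exact: yt.
have tE : subg Alt (sgval t * (sgval y)^-1) * y = t.
  by apply: subg_inj; rewrite sgval_mul sgval_subg ?is3cycle_Alt // mulgKV.
have := k3 _ u3; rewrite kE tE => /(canRL (mulgKV y)).
by rewrite tE => ->.
Qed.

Lemma fixes_ball_all f : f \in CAGAut n -> fixes_ball f 1 -> f = 1.
Proof.
move=> fA f1.
pose Q := [set s in Alt | [forall x, fixes_ball f x ==> fixes_ball f (subg Alt s * x)]].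
have Q_group : group_set Q.
  apply/group_setP; split.
    rewrite inE group1; apply/forallP=> x; apply/implyP.
    suff -> : subg Alt 1 = 1 by rewrite mul1g.
    by apply: subg_inj; rewrite sgval_subg.
  move=> s u /setIdP[sA /forallP sQ] /setIdP[uA /forallP uQ].
  rewrite inE groupM //; apply/forallP=> x; apply/implyP=> fx.
  have -> : subg Alt (s * u) * x = subg Alt s * (subg Alt u * x) by rewrite subgM // mulgA.
  by apply: (implyP (sQ _)); apply: (implyP (uQ _)).
have AltQ : 'Alt_('I_n) \subset Q.
  rewrite -(gen_3cycles n_ge5) (@gen_subG _ _ (Group Q_group)).
  apply/subsetP=> s; rewrite inE => s3; rewrite inE is3cycle_Alt //=.
  by apply/forallP=> x; apply/implyP; apply: fixes_ball_step.
apply/permP=> x; rewrite perm1.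
have /setIdP[_ /forallP/(_ 1)/implyP/(_ f1)] : sgval x \in Q by apply/(subsetP AltQ)/subgP.
by rewrite mulg1 sgvalK => /andP[/eqP].
Qed.

Lemma CAGAut_fix1E k : k \in CAGAut n -> k 1 = 1 ->
  exists sg : 'S_n, exists e : bool, k = conj_perm sg * (if e then hinv n else 1).
Proof.
move=> kA k1; have [sg [e ksg]] := CAGAut_fix1_3cycles kA k1.
exists sg, e; set tau := _ * _.
have tauA : tau \in CAGAut n.
  by rewrite groupM ?conj_perm_CAG //; case: (e); rewrite ?hinv_CAG ?group1.
have tauE x : tau x = if e then (alt_conj sg x)^-1 else alt_conj sg x.
  by rewrite permM conj_permE; case: (e); rewrite ?hinvE ?perm1.
have tau1 : tau 1 = 1 by rewrite tauE alt_conj1; case: (e); rewrite ?invg1.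
have k_tau t : is3cycle (sgval t) -> k t = tau t.
  move=> t3; apply: subg_inj; rewrite -{1}(sgvalK t) ksg // tauE.
  by case: (e); rewrite ?sgval_inv alt_conjE.
apply/eqP; rewrite eq_mulgV1; apply/eqP/fixes_ball_all; first by rewrite groupM ?groupV.
rewrite /fixes_ball permM k1 -{1}tau1 permK eqxx /=.
apply/forallP=> t; apply/implyP; rewrite cag_adj1 => t3.
by rewrite permM k_tau // permK.
Qed.

Lemma CAGAut_eq : (RAg <*> InnSg) <*> <[hinv n]> = CAGAut n.
Proof.
apply/eqP; rewrite eqEsubset; apply/andP; split.
  rewrite !(@join_subG _ _ _ CAGAut_group) cycle_subG hinv_CAG andbT.
  by apply/andP; split; apply/subsetP=> _ /morphimP[x _ _ ->]; rewrite ?rmul_perm_CAG ?conj_perm_CAG.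
apply/subsetP=> f fA; set J := _ <*> _.
have J_rmul g : rmul_perm g \in J.
  by apply/(subsetP (joing_subl _ _))/(subsetP (joing_subl _ _)); rewrite mem_morphim ?inE.
have J_conj s : conj_perm s \in J.
  by apply/(subsetP (joing_subl _ _))/(subsetP (joing_subr _ _)); rewrite mem_morphim ?inE.
have J_hinv : hinv n \in J by apply/(subsetP (joing_subr _ _))/cycle_id.
have f1A : f * rmul_perm (f 1)^-1 \in CAGAut n by rewrite groupM ?rmul_perm_CAG.
have [|sg [e f1E]] := CAGAut_fix1E f1A; first by rewrite permM rmul_permE mulgV.
have -> : f = f * rmul_perm (f 1)^-1 * rmul_perm (f 1).
  by rewrite -mulgA -rmul_permM mulVg rmul_perm1 mulg1.
by rewrite f1E !groupM //; case: (e).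
Qed.

End CompleteAlternatingGroupGraph.

Theorem theorem3p1 (n : nat) (hn : 5 <= n) :
  [/\ (RA n ><| InnS n) ><| <[hinv n]> = CAGAut n,
      RA n \isog 'Alt_('I_n),
      InnS n \isog 'Sym_('I_n) &
      #[hinv n] = 2].
Proof.
rewrite RA_im InnS_im (sdprodEY (RA_norm_InnS n) (RA_InnS_TI n)).
rewrite (sdprodEY (hinv_norm n) (hinv_TI hn)) CAGAut_eq // order_hinv //.
split=> //.
  apply: isog_symr (isog_trans (isog_subg _) (sub_isog (subxx _) (injm_rmul n))).
exact: isog_symr (sub_isog (subxx _) (injm_conj hn)).
Qed.
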